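(* Fix a universe $\mathcal{U}_i$ and assume function extensionality. The following are logically equivalent: (a) there exist terms (1) $\mathit{unit} : \prod_{A : \mathcal{U}_i} A = \sum_{a:A} 1$, (2) $\mathit{flip} : \prod_{A, B : \mathcal{U}_i}\prod_{C : A \to B \to \mathcal{U}_i} \left(\sum_{a:A}\sum_{b:B} C\,a\,b\right) = \left(\sum_{b:B}\sum_{a:A} C\,a\,b\right)$, (3) $\mathit{contract} : \prod_{A : \mathcal{U}_i} \mathit{isContr}(A) \to A = 1$, (4) $\mathit{unit}\beta$ witnessing $\mathsf{coerce}(\mathit{unit}_A)(a) = (a, * )$ for all $A : \mathcal{U}_i$, $a : A$, (5) $\mathit{flip}\beta$ witnessing $\mathsf{coerce}(\mathit{flip}_{A,B,C})(a,b,c) = (b,a,c)$ for all $A,B : \mathcal{U}_i$, $C : A \to B \to \mathcal{U}_i$, $a : A$, $b : B$, $c : C\,a\,b$; (b) there exist $\mathit{ua} : \mathit{UA}_i$ and $\mathit{ua}\beta : \mathit{UA}\beta_i(\mathit{ua})$, i.e. an inhabitant of $\sum_{\mathit{ua} : \mathit{UA}_i}\mathit{UA}\beta_i(\mathit{ua})$.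
   Context: Intensional Martin-Löf type theory with $\Sigma$, $\Pi$, intensional identity types, unit type $1$ with element $*$, and cumulative universes. Function extensionality: for all $A$, $B : A \to \mathcal{U}$, and $f, g : \prod_{x:A} B(x)$ there is a map $(\prod_{x:A} f(x) = g(x)) \to f = g$. Definitions: $\mathit{isContr}(A) \triangleq \sum_{a_0 : A}\prod_{a:A}(a_0 = a)$; $\mathit{fib}_f(b) \triangleq \sum_{a:A}(f\,a = b)$; $\mathit{isEquiv}(f) \triangleq \prod_{b:B}\mathit{isContr}(\mathit{fib}_f(b))$; $A \simeq B \triangleq \sum_{f : A \to B}\mathit{isEquiv}(f)$. $\mathit{idtoeqv} : (A = B) \to (A \simeq B)$ is defined by path induction with $\mathit{idtoeqv}(\mathsf{refl}) \triangleq \mathit{id}_A$, and $\mathsf{coerce}(p,a) \triangleq \mathrm{fst}(\mathit{idtoeqv}(p))(a)$. $\mathit{UA}_i \triangleq \prod_{A,B : \mathcal{U}_i}(A \simeq B) \to A = B$, and $\mathit{UA}\beta_i(\mathit{ua}) \triangleq \prod_{A,B : \mathcal{U}_i}\prod_{f : A \to B}\prod_{e : \mathit{isEquiv}(f)}\mathsf{coerce}(\mathit{ua}(f,e)) = f$. *)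

(* A fixed universe U (= U_i) and a larger universe U1 containing it. *)
Definition U1 := Type.
Definition U : U1 := Type.

Definition isContr (A : Type) : Type := {a0 : A & forall a : A, a0 = a}.
Definition fib {A B : Type} (f : A -> B) (b : B) : Type := {a : A & f a = b}.
Definition isEquiv {A B : Type} (f : A -> B) : Type := forall b : B, isContr (fib f b).
Definition Equiv (A B : Type) : Type := {f : A -> B & isEquiv f}.

Definition idIsEquiv (A : Type) : isEquiv (fun x : A => x) :=
  fun b => existT _ (existT (fun a => a = b) b eq_refl)
    (fun p => match p as p0 return existT (fun a => a = b) b eq_refl = p0 with
              | existT _ a e =>
                  match e as e0 in (_ = b0)
                        return existT (fun a1 => a1 = b0) b0 eq_refl
                               = existT (fun a1 => a1 = b0) a e0 with
                  | eq_refl => eq_refl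
                  end
              end).

Definition idEquiv (A : Type) : Equiv A A := existT _ (fun x : A => x) (idIsEquiv A).

Definition idtoeqv {A B : Type} (p : A = B) : Equiv A B :=
  match p in (_ = B0) return Equiv A B0 with
  | eq_refl => idEquiv A
  end.

Definition coerce {A B : Type} (p : A = B) (a : A) : B := projT1 (idtoeqv p) a.

(* Function extensionality (as a map, not necessarily an equivalence),
   for families in the universe U1 (which contains U). *)
Definition Funext : Type :=
  forall (A : U1) (B : A -> U1) (f g : forall x : A, B x),
    (forall x : A, f x = g x) -> f = g.

Definition UA : Type := forall A B : U, Equiv A B -> A = B.
Definition UAbeta (ua : UA) : Type :=
  forall (A B : U) (f : A -> B) (e : isEquiv f), coerce (ua A B (existT _ f e)) = f.

Definition CondA : Type :=
  { unit' : forall A : U, A = ({a : A & unit} : U) &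
  { flip : forall (A B : U) (C : A -> B -> U),
             ({a : A & {b : B & C a b}} : U) = ({b : B & {a : A & C a b}} : U) &
    ((forall A : U, isContr A -> A = (unit : U)) *
     (forall (A : U) (a : A), coerce (unit' A) a = existT (fun _ => unit) a tt) *
     (forall (A B : U) (C : A -> B -> U) (a : A) (b : B) (c : C a b),
        coerce (flip A B C) (existT _ a (existT _ b c))
        = existT _ b (existT _ a c)))%type } }.

Definition CondB : Type := { ua : UA & UAbeta ua }.

Definition LogEquiv (P Q : Type) : Type := ((P -> Q) * (Q -> P))%type.


(* Given univalence with its computation rule, the three equations are the
   univalence images of the evident equivalences, and their computation rules
   are instances of [UAbeta].  Conversely, an equivalence [f : A -> B] yields
   the chain
     A = Σ a, 1 = Σ a, Σ b, (f a = b) = Σ b, Σ a, (f a = b) = Σ b, 1 = B,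
   using [contract] fibrewise on the singletons and on the (contractible)
   fibres of [f]; following an element [a] along it with [unitβ] and [flipβ]
   lands on [f a]. *)

Lemma isEquiv_from_fib_section {A B : Type} (f : A -> B)
    (s : forall b, fib f b)
    (s_on_image : forall a, s (f a) = existT (fun x => f x = f a) a eq_refl) :
  isEquiv f.
Proof.
  intro b. exists (s b). intros [a []]. apply s_on_image.
Qed.

Lemma isContr_singleton {B : Type} (b0 : B) : isContr {b : B & b0 = b}.
Proof.
  exists (existT _ b0 eq_refl). intros [b []]. reflexivity.
Qed.

Lemma sigT_unit_intro_isEquiv (A : Type) :
  isEquiv (fun a : A => existT (fun _ => unit) a tt).
Proof.
  unshelve eapply isEquiv_from_fib_section.
  - intros [a []]. exact (existT _ a eq_refl).
  - reflexivity.
Qed.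

Definition sigT_swap {A B : Type} (C : A -> B -> Type)
    (w : {a : A & {b : B & C a b}}) : {b : B & {a : A & C a b}} :=
  match w with existT _ a (existT _ b c) => existT _ b (existT _ a c) end.

Lemma sigT_swap_isEquiv {A B : Type} (C : A -> B -> Type) :
  isEquiv (sigT_swap C).
Proof.
  unshelve eapply isEquiv_from_fib_section.
  - intros [b [a c]]. exact (existT _ (existT _ a (existT _ b c)) eq_refl).
  - intros [a [b c]]. reflexivity.
Qed.

Lemma isEquiv_to_unit_of_isContr {A : Type} :
  isContr A -> isEquiv (fun _ : A => tt).
Proof.
  intros [a0 center].
  unshelve eapply isEquiv_from_fib_section.
  - intros []. exact (existT _ a0 eq_refl).
  - intro a. simpl. destruct (center a). reflexivity.
Qed.

Lemma coerce_trans {A B C : Type} (p : A = B) (q : B = C) (x : A) :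
  coerce (eq_trans p q) x = coerce q (coerce p x).
Proof. destruct q, p. reflexivity. Qed.

Lemma coerce_symK {A B : Type} (p : A = B) (x : A) :
  coerce (eq_sym p) (coerce p x) = x.
Proof. destruct p. reflexivity. Qed.

Definition fapp {A B : Type} {f g : A -> B} (e : f = g) (x : A) : f x = g x :=
  match e with eq_refl => eq_refl end.

Definition sigT_ap {X : Type} {P Q : X -> U} (e : P = Q) :
  ({x : X & P x} : U) = ({x : X & Q x} : U) :=
  f_equal (fun R : X -> U => ({x : X & R x} : U)) e.

Lemma coerce_sigT_ap {X : Type} {P Q : X -> U} (e : P = Q) (x : X) (y : P x) :
  coerce (sigT_ap e) (existT _ x y) = existT _ x (coerce (fapp e x) y).
Proof. destruct e. reflexivity. Qed.

Section UnivalenceFromUnitFlip.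

Variable funext : Funext.
Variable unit' : forall A : U, A = ({a : A & unit} : U).
Variable flip : forall (A B : U) (C : A -> B -> U),
  ({a : A & {b : B & C a b}} : U) = ({b : B & {a : A & C a b}} : U).
Variable contract : forall A : U, isContr A -> A = (unit : U).
Hypothesis unit_beta :
  forall (A : U) (a : A), coerce (unit' A) a = existT (fun _ => unit) a tt.
Hypothesis flip_beta :
  forall (A B : U) (C : A -> B -> U) (a : A) (b : B) (c : C a b),
    coerce (flip A B C) (existT _ a (existT _ b c)) = existT _ b (existT _ a c).

Definition ua_of_unit_flip : UA :=
  fun A B w =>
    let f := projT1 w in
    eq_trans (unit' A)
   (eq_trans (sigT_ap (funext A (fun _ => U)
                (fun _ => (unit : U)) (fun a => ({b : B & f a = b} : U))
                (fun a => eq_sym (contract _ (isContr_singleton (f a))))))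
   (eq_trans (flip A B (fun a b => f a = b))
   (eq_trans (sigT_ap (funext B (fun _ => U)
                (fun b => ({a : A & f a = b} : U)) (fun _ => (unit : U))
                (fun b => contract _ (projT2 w b))))
             (eq_sym (unit' B))))).

Lemma ua_of_unit_flip_beta : UAbeta ua_of_unit_flip.
Proof.
  intros A B f e. apply (funext A (fun _ => B)). intro a.
  unfold ua_of_unit_flip; simpl.
  rewrite !coerce_trans, unit_beta, coerce_sigT_ap.
  destruct (coerce _ tt) as [b p].
  rewrite (flip_beta A B (fun a b => f a = b) a b p), coerce_sigT_ap.
  match goal with |- context [existT (fun _ => unit) b ?t] => destruct t end.
  rewrite <- (unit_beta B b), coerce_symK.
  symmetry. exact p.
Qed.

End UnivalenceFromUnitFlip.

Lemma condB_of_condA : Funext -> CondA -> CondB.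
Proof.
  intros funext [unit' [flip [[contract unit_beta] flip_beta]]].
  exists (ua_of_unit_flip funext unit' flip contract).
  exact (ua_of_unit_flip_beta funext unit' flip contract unit_beta flip_beta).
Qed.

Lemma condA_of_condB : CondB -> CondA.
Proof.
  intros [ua ua_beta].
  exists (fun A => ua _ _ (existT _ _ (sigT_unit_intro_isEquiv A))).
  exists (fun A B C => ua _ _ (existT _ _ (sigT_swap_isEquiv C))).
  repeat split.
  - intros A contrA. exact (ua _ _ (existT _ _ (isEquiv_to_unit_of_isContr contrA))).
  - intros A a. rewrite ua_beta. reflexivity.
  - intros A B C a b c. rewrite ua_beta. reflexivity.
Qed.

Theorem mainTheorem5 (funext : Funext) : LogEquiv CondA CondB.
Proof.
  split.
  - exact (condB_of_condA funext).
  - exact condA_of_condB.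
Qed.
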